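(* Let $\alpha,\beta>0$, let $c(\psi)=\sqrt{\alpha\cos^2\psi+\beta\sin^2\psi}$, let $p\ge 0$ be an integer, and let $X_{\Delta x}^p(\Omega)$ be the discontinuous piecewise polynomial space on the periodic mesh described in the context. Suppose $R,S,\psi:[0,T]\to X_{\Delta x}^p(\Omega)$ are differentiable in time and, for every $t\in[0,T]$, satisfy (with $c=c(\psi(x,t))$ inside the integrals, $x$-derivatives taken cellwise, and all sums over $j=1,\dots,N$) $$\sum_j\int_{\Omega_j}R_t\phi\,dx+\sum_j\int_{\Omega_j}cR\phi_x\,dx-\sum_j\overline{c}_{j+1/2}\overline{R}_{j+1/2}\phi^-_{j+1/2}+\sum_j\overline{c}_{j-1/2}\overline{R}_{j-1/2}\phi^+_{j-1/2}=\mathcal{B}(\phi)$$ for all $\phi\in X_{\Delta x}^p(\Omega)$, $$\sum_j\int_{\Omega_j}S_t\eta\,dx-\sum_j\int_{\Omega_j}cS\eta_x\,dx+\sum_j\overline{c}_{j+1/2}\overline{S}_{j+1/2}\eta^-_{j+1/2}-\sum_j\overline{c}_{j-1/2}\overline{S}_{j-1/2}\eta^+_{j-1/2}=\mathcal{B}(\eta)$$ for all $\eta\in X_{\Delta x}^p(\Omega)$, and $\sum_j\int_{\Omega_j}\psi_t\zeta\,dx=\sum_j\int_{\Omega_j}\frac{R+S}{2}\zeta\,dx$ for all $\zeta\in X_{\Delta x}^p(\Omega)$, where for a test function $\chi$ $$\mathcal{B}(\chi)=\tfrac12\sum_j\int_{\Omega_j}c(R\chi)_x\,dx-\tfrac12\sum_j\overline{c}_{j+1/2}R^-_{j+1/2}\chi^-_{j+1/2}+\tfrac12\sum_j\overline{c}_{j-1/2}R^+_{j-1/2}\chi^+_{j-1/2}-\tfrac12\sum_j\int_{\Omega_j}c(S\chi)_x\,dx+\tfrac12\sum_j\overline{c}_{j+1/2}S^-_{j+1/2}\chi^-_{j+1/2}-\tfrac12\sum_j\overline{c}_{j-1/2}S^+_{j-1/2}\chi^+_{j-1/2}.$$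 Then $$\frac{d}{dt}\left(\sum_{j=1}^N\int_{\Omega_j}\frac{R^2+S^2}{2}\,dx\right)=0.$$
   Context: The domain $\Omega$ is partitioned into cells $\Omega_j=[x_{j-1/2},x_{j+1/2}]$, $j=1,\dots,N$, with $\Delta x_j=x_{j+1/2}-x_{j-1/2}$. $X_{\Delta x}^p(\Omega)=\{u\in L^2(\Omega): u|_{\Omega_j}$ is a polynomial of degree $\le p$ for each $j\}$. For a grid function $u$, $u^+_{j+1/2}$ and $u^-_{j+1/2}$ denote its traces at $x_{j+1/2}$ from the right and left respectively; $\overline{u}_{j+1/2}=(u^+_{j+1/2}+u^-_{j+1/2})/2$ and $\llbracket u\rrbracket_{j+1/2}=u^+_{j+1/2}-u^-_{j+1/2}$. Also $c^\pm_{j+1/2}=c(\psi^\pm_{j+1/2})$ and $\overline{c}_{j+1/2}=(c^+_{j+1/2}+c^-_{j+1/2})/2$. Periodic boundary conditions: the endpoints $x_{1/2}$ and $x_{N+1/2}$ are identified, i.e. $u^-_{1/2}:=u^-_{N+1/2}$ (trace from cell $N$) and $u^+_{N+1/2}:=u^+_{1/2}$ (trace from cell $1$), for all grid functions including $\psi$ and the test functions. *)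

From Stdlib Require Import Reals Arith.
From Coquelicot Require Import Coquelicot.
Open Scope R_scope.

(* ---- Mesh conventions ----------------------------------------------------
   Nodes: xn i = x_{i+1/2}, i = 0..N.
   An element u of X^p_{Dx}(Omega) is represented by its cellwise monomial
   coefficients: u j k = coefficient of x^k of the polynomial u|_{Omega_j}
   (only j = 1..N and k = 0..p matter).  Every element of X^p has such a
   representation and every such family is an element of X^p. *)

Definition pev (p : nat) (a : nat -> R) (x : R) : R :=
  sum_f_R0 (fun k => a k * x ^ k) p.

Definition cellf (p : nat) (u : nat -> nat -> R) (j : nat) : R -> R :=
  pev p (u j).

Fixpoint sum1 (n : nat) (f : nat -> R) : R :=
  match n with
  | O => 0
  | S m => sum1 m f + f (S m)
  end.

Definition cellint (xn : nat -> R) (j : nat) (g : R -> R) : R :=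
  RInt g (xn (j - 1)%nat) (xn j).

(* traces at node x_{i+1/2}, i = 0..N, with periodic identification *)
Definition trm (N p : nat) (xn : nat -> R) (u : nat -> nat -> R) (i : nat) : R :=
  if Nat.eqb i 0 then cellf p u N (xn N) else cellf p u i (xn i).
Definition trp (N p : nat) (xn : nat -> R) (u : nat -> nat -> R) (i : nat) : R :=
  if Nat.eqb i N then cellf p u 1 (xn O) else cellf p u (S i) (xn i).
Definition avg (N p : nat) (xn : nat -> R) (u : nat -> nat -> R) (i : nat) : R :=
  (trp N p xn u i + trm N p xn u i) / 2.

Definition cw (alpha beta : R) (psi : R) : R :=
  sqrt (alpha * (cos psi) ^ 2 + beta * (sin psi) ^ 2).

Definition cbar (alpha beta : R) (N p : nat) (xn : nat -> R)
  (psi : nat -> nat -> R) (i : nat) : R :=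
  (cw alpha beta (trp N p xn psi i) + cw alpha beta (trm N p xn psi i)) / 2.

Definition Bform (alpha beta : R) (N p : nat) (xn : nat -> R)
  (Rv Sv Pv chi : nat -> nat -> R) : R :=
  let c := fun j x => cw alpha beta (cellf p Pv j x) in
  let cb := cbar alpha beta N p xn Pv in
  / 2 * sum1 N (fun j => cellint xn j (fun x =>
          c j x * Derive (fun y => cellf p Rv j y * cellf p chi j y) x))
  - / 2 * sum1 N (fun j => cb j * trm N p xn Rv j * trm N p xn chi j)
  + / 2 * sum1 N (fun j => cb (j - 1)%nat * trp N p xn Rv (j - 1)%nat
                                          * trp N p xn chi (j - 1)%nat)
  - / 2 * sum1 N (fun j => cellint xn j (fun x =>
          c j x * Derive (fun y => cellf p Sv j y * cellf p chi j y) x))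
  + / 2 * sum1 N (fun j => cb j * trm N p xn Sv j * trm N p xn chi j)
  - / 2 * sum1 N (fun j => cb (j - 1)%nat * trp N p xn Sv (j - 1)%nat
                                          * trp N p xn chi (j - 1)%nat).

Definition deriv_within (a b : R) (f : R -> R) (t d : R) : Prop :=
  filterlim (fun s => (f s - f t) / (s - t))
    (within (fun s => s <> t /\ a <= s <= b) (locally t)) (locally d).

Definition energy (N p : nat) (xn : nat -> R) (Rv Sv : nat -> nat -> R) : R :=
  sum1 N (fun j => cellint xn j (fun x =>
     (cellf p Rv j x ^ 2 + cellf p Sv j x ^ 2) / 2)).

From Stdlib Require Import Reals Arith Lra Lia Psatz.
From Coquelicot Require Import Coquelicot.
Open Scope R_scope.

(* Since the energy is a quadratic form in the DG coefficients, its time derivative is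
   sum_j int (R_t R + S_t S).  Testing the R-equation with phi = R and the S-equation with
   eta = S expresses this through volume and flux terms.  In the volume terms,
   (1/2) int c (R^2)_x = int c R R_x cancels the term int c R R_x (likewise for S), and
   the mixed terms int c (RS)_x of the two equations cancel each other.  The flux terms of
   cell j are X_j - X_{j-1} for a node quantity X, so they telescope, and periodicity of
   the traces gives X_N = X_0. *)

Lemma is_derive_pev_S p a x :
  is_derive (pev (S p) a) x (pev p (fun k => INR (S k) * a (S k)) x).
Proof.
  induction p as [|p IH].
  - apply (is_derive_ext (fun y => a 0%nat + a 1%nat * y)).
    { intro y; unfold pev; simpl; ring. }
    auto_derive; auto. unfold pev; simpl; ring.
  - apply (is_derive_ext (fun y => pev (S p) a y + a (S (S p)) * y ^ S (S p))).
    { intro y; reflexivity. }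
    replace (pev (S p) (fun k => INR (S k) * a (S k)) x) with
      (pev p (fun k => INR (S k) * a (S k)) x + a (S (S p)) * (INR (S (S p)) * x ^ S p))
      by (unfold pev; simpl; ring).
    apply (@is_derive_plus R_AbsRing R_NormedModule); [apply IH|].
    auto_derive; auto. simpl; ring.
Qed.

Lemma Derive_pev_0 a x : Derive (pev 0 a) x = 0.
Proof.
  rewrite (Derive_ext _ (fun _ => a 0%nat)) by (intro; unfold pev; simpl; ring).
  apply Derive_const.
Qed.

Lemma ex_derive_pev p a x : ex_derive (pev p a) x.
Proof.
  destruct p as [|p].
  - apply (ex_derive_ext (fun _ => a 0%nat)); [intro; unfold pev; simpl; ring|].
    apply ex_derive_const.
  - eexists; apply is_derive_pev_S.
Qed.

Lemma continuous_pev p a x : continuous (pev p a) x.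
Proof. apply (@ex_derive_continuous R_AbsRing R_NormedModule), ex_derive_pev. Qed.

Lemma continuous_Derive_pev p a x : continuous (Derive (pev p a)) x.
Proof.
  destruct p as [|p].
  - apply (continuous_ext (fun _ => 0)); [intro; symmetry; apply Derive_pev_0|].
    apply continuous_const.
  - apply (continuous_ext (pev p (fun k => INR (S k) * a (S k)))).
    + intro y; symmetry; apply is_derive_unique, is_derive_pev_S.
    + apply continuous_pev.
Qed.

Lemma cw_arg_pos alpha beta y : 0 < alpha -> 0 < beta ->
  0 < alpha * cos y ^ 2 + beta * sin y ^ 2.
Proof.
  intros Ha Hb. pose proof (sin2_cos2 y) as H. unfold Rsqr in H.
  pose proof (pow2_ge_0 (cos y)). pose proof (pow2_ge_0 (sin y)).
  destruct (Rle_dec alpha beta); nra.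
Qed.

Lemma continuous_cw_pev alpha beta p a x : 0 < alpha -> 0 < beta ->
  continuous (fun y => cw alpha beta (pev p a y)) x.
Proof.
  intros Ha Hb. apply (@ex_derive_continuous R_AbsRing R_NormedModule).
  unfold cw. auto_derive.
  pose proof (cw_arg_pos alpha beta (pev p a x) Ha Hb). simpl in *.
  repeat split; auto using ex_derive_pev; lra.
Qed.

Lemma continuous_multR (f g : R -> R) x :
  continuous f x -> continuous g x -> continuous (fun y => f y * g y) x.
Proof. apply (@continuous_mult R_UniformSpace R_AbsRing). Qed.

Lemma ex_RInt_continuousR (f : R -> R) u v : (forall x, continuous f x) -> ex_RInt f u v.
Proof. intro Hf; apply (ex_RInt_continuous (V := R_CompleteNormedModule)); auto. Qed.

Lemma ex_RInt_sum_f_R0 (f : nat -> R -> R) n u v : (forall k, ex_RInt (f k) u v) ->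
  ex_RInt (fun x => sum_f_R0 (fun k => f k x) n) u v.
Proof.
  intro Hf; induction n as [|n IH]; simpl; [apply Hf|].
  apply (ex_RInt_plus (V := R_CompleteNormedModule)); [apply IH|apply Hf].
Qed.

Lemma RInt_sum_f_R0 (f : nat -> R -> R) n u v : (forall k, ex_RInt (f k) u v) ->
  RInt (fun x => sum_f_R0 (fun k => f k x) n) u v = sum_f_R0 (fun k => RInt (f k) u v) n.
Proof.
  intro Hf; induction n as [|n IH]; simpl; [reflexivity|].
  rewrite <- IH. apply (RInt_plus (V := R_CompleteNormedModule)); [|apply Hf].
  apply ex_RInt_sum_f_R0, Hf.
Qed.

(* The DG mass matrix: [RInt (pev p a * pev p b) u v] written in the coefficients
   (lemma [RInt_pev_mult]), so that time derivatives pass through it. *)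
Definition mass (p : nat) (a b : nat -> R) (u v : R) : R :=
  sum_f_R0 (fun k => sum_f_R0 (fun l => a k * b l * RInt (fun x => x ^ (k + l)) u v) p) p.

Lemma RInt_pev_mult p a b u v : RInt (fun x => pev p a x * pev p b x) u v = mass p a b u v.
Proof.
  assert (Hmon : forall k l, ex_RInt (fun x => x ^ (k + l)) u v).
  { intros k l; apply ex_RInt_continuousR; intro x.
    apply (@ex_derive_continuous R_AbsRing R_NormedModule); auto_derive; auto. }
  assert (Hterm : forall k l, ex_RInt (fun x => a k * b l * x ^ (k + l)) u v).
  { intros k l; apply (ex_RInt_scal (V := R_CompleteNormedModule)), Hmon. }
  rewrite (RInt_ext _ (fun x => sum_f_R0 (fun k =>
             sum_f_R0 (fun l => a k * b l * x ^ (k + l)) p) p)).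
  2: { intros x _; unfold pev. rewrite Rmult_comm, scal_sum.
       apply sum_eq; intros k _. rewrite scal_sum.
       apply sum_eq; intros l _. rewrite pow_add; ring. }
  rewrite RInt_sum_f_R0 by (intro k; apply ex_RInt_sum_f_R0, Hterm).
  apply sum_eq; intros k _. rewrite RInt_sum_f_R0 by apply Hterm.
  apply sum_eq; intros l _. apply (RInt_scal (V := R_CompleteNormedModule)), Hmon.
Qed.

Lemma mass_sym p a b u v : mass p a b u v = mass p b a u v.
Proof.
  rewrite <- !RInt_pev_mult. apply RInt_ext; intros; apply Rmult_comm.
Qed.

Section DerivWithin.

Variables (a b t : R).

Let F := within (fun s => s <> t /\ a <= s <= b) (locally t).

Lemma deriv_within_ext (f g : R -> R) d :
  (forall s, f s = g s) -> deriv_within a b f t d -> deriv_within a b g t d.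
Proof.
  unfold deriv_within; intros Hfg Hf. eapply filterlim_ext; [|exact Hf].
  intro s; simpl; rewrite !Hfg; reflexivity.
Qed.

Lemma deriv_within_val (f : R -> R) d d' :
  d = d' -> deriv_within a b f t d -> deriv_within a b f t d'.
Proof. intros ->; auto. Qed.

Lemma deriv_within_const c : deriv_within a b (fun _ => c) t 0.
Proof.
  unfold deriv_within. eapply filterlim_ext; [|apply filterlim_const].
  intro s; simpl; unfold Rdiv; ring.
Qed.

Lemma deriv_within_plus f g df dg :
  deriv_within a b f t df -> deriv_within a b g t dg ->
  deriv_within a b (fun s => f s + g s) t (df + dg).
Proof.
  unfold deriv_within; intros Hf Hg.
  eapply filterlim_ext;
    [|apply (filterlim_comp_2 _ _ Rplus Hf Hg
              (@filterlim_plus R_AbsRing R_NormedModule df dg))].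
  intro s; simpl; unfold Rdiv; ring.
Qed.

Lemma deriv_within_continuous f df :
  deriv_within a b f t df -> filterlim f F (locally (f t)).
Proof.
  unfold deriv_within; intro Hf.
  (* Off [t], f s = f t + (s - t) * ((f s - f t) / (s - t)). *)
  assert (Hs : filterlim (fun s => s) F (locally t)).
  { intros P HP. apply filter_imp with (2 := HP). auto. }
  assert (Hid : filterlim (fun s => s + - t) F (locally 0)).
  { replace 0 with (t + - t) by ring.
    apply (filterlim_comp_2 _ _ Rplus Hs (filterlim_const (- t))
             (@filterlim_plus R_AbsRing R_NormedModule t (- t))). }
  pose proof (filterlim_comp_2 _ _ Rmult Hid Hf
                (@filterlim_scal R_AbsRing R_NormedModule 0 df)) as Hincr.
  pose proof (filterlim_comp_2 _ _ Rplus (filterlim_const (f t)) Hincr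
                (@filterlim_plus R_AbsRing R_NormedModule (f t) (0 * df))) as Hlim.
  rewrite Rmult_0_l in Hlim. change (plus (f t) 0) with (f t + 0) in Hlim.
  rewrite Rplus_0_r in Hlim.
  eapply filterlim_ext_loc; [|exact Hlim].
  unfold F, within. apply filter_forall. intros s [Hst _]. simpl. field. lra.
Qed.

Lemma deriv_within_mult f g df dg :
  deriv_within a b f t df -> deriv_within a b g t dg ->
  deriv_within a b (fun s => f s * g s) t (df * g t + f t * dg).
Proof.
  intros Hf Hg. pose proof (deriv_within_continuous f df Hf) as Cf.
  unfold deriv_within in *.
  pose proof (filterlim_comp_2 _ _ Rmult Cf Hg
                (@filterlim_scal R_AbsRing R_NormedModule (f t) dg)) as H1.
  pose proof (filterlim_comp_2 _ _ Rmult (filterlim_const (g t)) Hf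
                (@filterlim_scal R_AbsRing R_NormedModule (g t) df)) as H2.
  pose proof (filterlim_comp_2 _ _ Rplus H1 H2
                (@filterlim_plus R_AbsRing R_NormedModule _ _)) as H3.
  replace (df * g t + f t * dg) with (f t * dg + g t * df) by ring.
  eapply filterlim_ext; [|exact H3].
  intro s; simpl; unfold Rdiv; ring.
Qed.

Lemma deriv_within_scal k f df :
  deriv_within a b f t df -> deriv_within a b (fun s => k * f s) t (k * df).
Proof.
  intro Hf. eapply deriv_within_val;
    [|apply (deriv_within_mult (fun _ => k) f 0 df (deriv_within_const k) Hf)].
  ring.
Qed.

Lemma deriv_within_sum_f_R0 (f : nat -> R -> R) (d : nat -> R) n :
  (forall k, (k <= n)%nat -> deriv_within a b (f k) t (d k)) ->
  deriv_within a b (fun s => sum_f_R0 (fun k => f k s) n) t (sum_f_R0 d n).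
Proof.
  induction n as [|n IH]; intro Hf; simpl; [apply Hf; lia|].
  apply (deriv_within_plus (fun s => sum_f_R0 (fun k => f k s) n) (f (S n)));
    [apply IH; intros; apply Hf|apply Hf]; lia.
Qed.

Lemma deriv_within_sum1 (f : nat -> R -> R) (d : nat -> R) n :
  (forall j, (1 <= j <= n)%nat -> deriv_within a b (f j) t (d j)) ->
  deriv_within a b (fun s => sum1 n (fun j => f j s)) t (sum1 n d).
Proof.
  induction n as [|n IH]; intro Hf; simpl; [apply deriv_within_const|].
  apply (deriv_within_plus (fun s => sum1 n (fun j => f j s)) (f (S n)));
    [apply IH; intros; apply Hf|apply Hf]; lia.
Qed.

End DerivWithin.

Lemma sum1_ext n f g : (forall j, f j = g j) -> sum1 n f = sum1 n g.
Proof. intro Hfg; induction n as [|n IH]; simpl; [|rewrite IH, Hfg]; reflexivity. Qed.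

Lemma sum1_plus n f g : sum1 n (fun j => f j + g j) = sum1 n f + sum1 n g.
Proof. induction n as [|n IH]; simpl; [|rewrite IH]; ring. Qed.

Lemma sum1_scal n k f : k * sum1 n f = sum1 n (fun j => k * f j).
Proof. induction n as [|n IH]; simpl; [|rewrite <- IH]; ring. Qed.

Lemma sum1_telescope n (X : nat -> R) : sum1 n (fun j => X j - X (j - 1)%nat) = X n - X 0%nat.
Proof.
  induction n as [|n IH]; simpl; [ring|]. rewrite IH, Nat.sub_0_r. ring.
Qed.

Lemma deriv_within_mass lo hi t p (A B : R -> nat -> R) (dA dB : nat -> R) u v :
  (forall k, (k <= p)%nat -> deriv_within lo hi (fun s => A s k) t (dA k)) ->
  (forall k, (k <= p)%nat -> deriv_within lo hi (fun s => B s k) t (dB k)) ->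
  deriv_within lo hi (fun s => mass p (A s) (B s) u v) t
    (mass p dA (B t) u v + mass p (A t) dB u v).
Proof.
  intros HA HB. unfold mass. rewrite <- sum_plus.
  apply deriv_within_sum_f_R0; intros k Hk.
  rewrite <- sum_plus. apply deriv_within_sum_f_R0; intros l Hl.
  apply (deriv_within_ext _ _ _ (fun s => RInt (fun x => x ^ (k + l)) u v * (A s k * B s l)));
    [intro; ring|].
  eapply deriv_within_val; [|apply deriv_within_scal, deriv_within_mult; auto].
  cbv beta; ring.
Qed.

Lemma ex_RInt_pev_mult p a b u v : ex_RInt (fun x => pev p a x * pev p b x) u v.
Proof.
  apply ex_RInt_continuousR; intro x. apply continuous_multR; apply continuous_pev.
Qed.

Lemma energy_mass N p xn (U V : nat -> nat -> R) : energy N p xn U V =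
  sum1 N (fun j => / 2 * mass p (U j) (U j) (xn (j - 1)%nat) (xn j)
                 + / 2 * mass p (V j) (V j) (xn (j - 1)%nat) (xn j)).
Proof.
  unfold energy. apply sum1_ext; intro j. unfold cellint, cellf.
  rewrite <- !RInt_pev_mult.
  rewrite <- (RInt_scal (V := R_CompleteNormedModule) (fun x => pev p (U j) x * pev p (U j) x)),
          <- (RInt_scal (V := R_CompleteNormedModule) (fun x => pev p (V j) x * pev p (V j) x))
    by apply ex_RInt_pev_mult.
  rewrite <- (RInt_plus (V := R_CompleteNormedModule)).
  - apply RInt_ext; intros x _. cbn. field.
  - apply (ex_RInt_scal (V := R_CompleteNormedModule)), ex_RInt_pev_mult.
  - apply (ex_RInt_scal (V := R_CompleteNormedModule)), ex_RInt_pev_mult.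
Qed.

Lemma deriv_within_energy lo hi t N p xn (Rc Sc : R -> nat -> nat -> R) (Rd Sd : nat -> nat -> R) :
  (forall j k, (1 <= j <= N)%nat -> (k <= p)%nat ->
      deriv_within lo hi (fun s => Rc s j k) t (Rd j k) /\
      deriv_within lo hi (fun s => Sc s j k) t (Sd j k)) ->
  deriv_within lo hi (fun s => energy N p xn (Rc s) (Sc s)) t
    (sum1 N (fun j => cellint xn j (fun x => cellf p Rd j x * cellf p (Rc t) j x))
     + sum1 N (fun j => cellint xn j (fun x => cellf p Sd j x * cellf p (Sc t) j x))).
Proof.
  intro Hd.
  eapply deriv_within_ext; [intro s; symmetry; apply energy_mass|].
  rewrite <- sum1_plus. eapply deriv_within_val; [|apply deriv_within_sum1].
  2: { intros j Hj. apply deriv_within_plus; apply deriv_within_scal;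
       apply deriv_within_mass; intros k Hk; apply (Hd j k Hj Hk). }
  apply sum1_ext; intro j. unfold cellint, cellf. rewrite !RInt_pev_mult.
  rewrite (mass_sym p (Rc t j)), (mass_sym p (Sc t j)). field.
Qed.

Lemma RInt_mult_Derive_sqr (w f : R -> R) u v :
  (forall x, continuous w x) -> (forall x, ex_derive f x) ->
  (forall x, continuous (Derive f) x) ->
  RInt (fun x => w x * Derive (fun y => f y * f y) x) u v
  = 2 * RInt (fun x => w x * f x * Derive f x) u v.
Proof.
  intros Hw Hf Hf'.
  rewrite <- (RInt_scal (V := R_CompleteNormedModule)).
  - apply RInt_ext; intros x _. rewrite Derive_mult by apply Hf. cbn. ring.
  - apply ex_RInt_continuousR; intro x.
    repeat apply continuous_multR; auto.
    apply (@ex_derive_continuous R_AbsRing R_NormedModule), Hf.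
Qed.

Lemma sum1_cellint_cw_Derive_sqr alpha beta n p xn (P U : nat -> nat -> R) :
  0 < alpha -> 0 < beta ->
  / 2 * sum1 n (fun j => cellint xn j (fun x => cw alpha beta (cellf p P j x) *
          Derive (fun y => cellf p U j y * cellf p U j y) x))
  = sum1 n (fun j => cellint xn j (fun x => cw alpha beta (cellf p P j x) * cellf p U j x
          * Derive (cellf p U j) x)).
Proof.
  intros Ha Hb. rewrite sum1_scal. apply sum1_ext; intro j. unfold cellint.
  rewrite RInt_mult_Derive_sqr.
  - field.
  - intro x; apply continuous_cw_pev; assumption.
  - apply ex_derive_pev.
  - apply continuous_Derive_pev.
Qed.

Lemma sum1_cellint_Derive_mult_comm n xn (w f g : nat -> R -> R) :
  sum1 n (fun j => cellint xn j (fun x => w j x * Derive (fun y => f j y * g j y) x))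
  = sum1 n (fun j => cellint xn j (fun x => w j x * Derive (fun y => g j y * f j y) x)).
Proof.
  apply sum1_ext; intro j. unfold cellint. apply RInt_ext; intros x _.
  f_equal. apply Derive_ext; intro; apply Rmult_comm.
Qed.

(* Cell [j] contributes [X j - X (j - 1)] with [X i = cb i (um i up i - vm i vp i) / 2],
   and periodicity of the traces makes [X N = X 0]. *)
Lemma flux_terms_cancel N (cb um up vm vp : nat -> R) :
  cb N = cb 0%nat -> um N = um 0%nat -> up N = up 0%nat ->
  vm N = vm 0%nat -> vp N = vp 0%nat ->
  sum1 N (fun j => cb j * ((up j + um j) / 2) * um j)
  - sum1 N (fun j => cb (j - 1)%nat * ((up (j - 1)%nat + um (j - 1)%nat) / 2) * up (j - 1)%nat)
  - / 2 * sum1 N (fun j => cb j * um j * um j)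
  + / 2 * sum1 N (fun j => cb (j - 1)%nat * up (j - 1)%nat * up (j - 1)%nat)
  + / 2 * sum1 N (fun j => cb j * vm j * um j)
  - / 2 * sum1 N (fun j => cb (j - 1)%nat * vp (j - 1)%nat * up (j - 1)%nat)
  - sum1 N (fun j => cb j * ((vp j + vm j) / 2) * vm j)
  + sum1 N (fun j => cb (j - 1)%nat * ((vp (j - 1)%nat + vm (j - 1)%nat) / 2) * vp (j - 1)%nat)
  - / 2 * sum1 N (fun j => cb j * um j * vm j)
  + / 2 * sum1 N (fun j => cb (j - 1)%nat * up (j - 1)%nat * vp (j - 1)%nat)
  + / 2 * sum1 N (fun j => cb j * vm j * vm j)
  - / 2 * sum1 N (fun j => cb (j - 1)%nat * vp (j - 1)%nat * vp (j - 1)%nat)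
  = 0.
Proof.
  intros Hcb Hum Hup Hvm Hvp.
  set (X := fun i => cb i * (um i * up i - vm i * vp i) / 2).
  transitivity (sum1 N (fun j => X j - X (j - 1)%nat)).
  - clear Hcb Hum Hup Hvm Hvp. induction N as [|n IH]; cbn [sum1]; [ring|].
    rewrite <- IH. unfold X. field.
  - rewrite sum1_telescope. unfold X. rewrite Hcb, Hum, Hup, Hvm, Hvp. ring.
Qed.

Lemma trm_periodic N p xn u : (1 <= N)%nat -> trm N p xn u N = trm N p xn u 0%nat.
Proof. intro HN. unfold trm. destruct N; [lia|reflexivity]. Qed.

Lemma trp_periodic N p xn u : (1 <= N)%nat -> trp N p xn u N = trp N p xn u 0%nat.
Proof. intro HN. unfold trp. rewrite Nat.eqb_refl. destruct N; [lia|reflexivity]. Qed.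

Lemma cbar_periodic alpha beta N p xn P : (1 <= N)%nat ->
  cbar alpha beta N p xn P N = cbar alpha beta N p xn P 0%nat.
Proof. intro HN. unfold cbar. rewrite trm_periodic, trp_periodic by exact HN. reflexivity. Qed.

Theorem proposition2p1
  (alpha beta : R) (N p : nat) (xn : nat -> R) (T : R)
  (Rc Sc Pc Rd Sd Pd : R -> nat -> nat -> R) :
  0 < alpha -> 0 < beta ->
  (1 <= N)%nat ->
  (forall i : nat, (i < N)%nat -> xn i < xn (S i)) ->
  (forall t, 0 <= t <= T -> forall j k, (1 <= j <= N)%nat -> (k <= p)%nat ->
      deriv_within 0 T (fun s => Rc s j k) t (Rd t j k) /\
      deriv_within 0 T (fun s => Sc s j k) t (Sd t j k) /\
      deriv_within 0 T (fun s => Pc s j k) t (Pd t j k)) ->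
  (forall t, 0 <= t <= T -> forall phi : nat -> nat -> R,
      sum1 N (fun j => cellint xn j (fun x => cellf p (Rd t) j x * cellf p phi j x))
      + sum1 N (fun j => cellint xn j (fun x =>
            cw alpha beta (cellf p (Pc t) j x) * cellf p (Rc t) j x
              * Derive (cellf p phi j) x))
      - sum1 N (fun j => cbar alpha beta N p xn (Pc t) j * avg N p xn (Rc t) j
                           * trm N p xn phi j)
      + sum1 N (fun j => cbar alpha beta N p xn (Pc t) (j - 1)%nat
                           * avg N p xn (Rc t) (j - 1)%nat
                           * trp N p xn phi (j - 1)%nat)
      = Bform alpha beta N p xn (Rc t) (Sc t) (Pc t) phi) ->
  (forall t, 0 <= t <= T -> forall eta : nat -> nat -> R,
      sum1 N (fun j => cellint xn j (fun x => cellf p (Sd t) j x * cellf p eta j x))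
      - sum1 N (fun j => cellint xn j (fun x =>
            cw alpha beta (cellf p (Pc t) j x) * cellf p (Sc t) j x
              * Derive (cellf p eta j) x))
      + sum1 N (fun j => cbar alpha beta N p xn (Pc t) j * avg N p xn (Sc t) j
                           * trm N p xn eta j)
      - sum1 N (fun j => cbar alpha beta N p xn (Pc t) (j - 1)%nat
                           * avg N p xn (Sc t) (j - 1)%nat
                           * trp N p xn eta (j - 1)%nat)
      = Bform alpha beta N p xn (Rc t) (Sc t) (Pc t) eta) ->
  (forall t, 0 <= t <= T -> forall zeta : nat -> nat -> R,
      sum1 N (fun j => cellint xn j (fun x => cellf p (Pd t) j x * cellf p zeta j x))
      = sum1 N (fun j => cellint xn j (fun x =>
            (cellf p (Rc t) j x + cellf p (Sc t) j x) / 2 * cellf p zeta j x))) ->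
  forall t, 0 <= t <= T ->
    deriv_within 0 T (fun s => energy N p xn (Rc s) (Sc s)) t 0.
Proof.
  intros Ha Hb HN _ Hd HR HS _ t Ht.
  eapply deriv_within_val; [|apply (deriv_within_energy 0 T t N p xn Rc Sc (Rd t) (Sd t))].
  2: { intros j k Hj Hk. destruct (Hd t Ht j k Hj Hk) as [HdR [HdS _]]. split; assumption. }
  specialize (HR t Ht (Rc t)). specialize (HS t Ht (Sc t)).
  unfold Bform, avg in HR, HS. cbv beta zeta in HR, HS.
  pose proof (sum1_cellint_cw_Derive_sqr alpha beta N p xn (Pc t) (Rc t) Ha Hb) as HvolR.
  pose proof (sum1_cellint_cw_Derive_sqr alpha beta N p xn (Pc t) (Sc t) Ha Hb) as HvolS.
  pose proof (sum1_cellint_Derive_mult_comm N xn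
                (fun j x => cw alpha beta (cellf p (Pc t) j x))
                (cellf p (Sc t)) (cellf p (Rc t))) as Hcross.
  pose proof (flux_terms_cancel N (cbar alpha beta N p xn (Pc t))
                (trm N p xn (Rc t)) (trp N p xn (Rc t)) (trm N p xn (Sc t)) (trp N p xn (Sc t))
                (cbar_periodic _ _ _ _ _ _ HN) (trm_periodic _ _ _ _ HN)
                (trp_periodic _ _ _ _ HN) (trm_periodic _ _ _ _ HN)
                (trp_periodic _ _ _ _ HN)) as Hflux.
  cbv beta in Hcross.
  lra.
Qed.
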